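(* Let $B_1,\ldots,B_r$ be size-$2$ subsets of $\mathbb Z_T$ with $r\ge T^3$. Then there exists a nontrivial subgroup $H\le\mathbb Z_T$ such that the multiset $B_1+B_2+\cdots+B_r$ has bias at most $4T^{3/2}/r^{1/2}$ with respect to $H$.
   Context: $\mathbb Z_T$ is the additive cyclic group of order $T$. For multisets $A,B$, $A+B=\{a+b:a\in A,b\in B\}$ as a multiset; $\mu_A(x)$ is the multiplicity of $x$ in $A$. A multiset $A$ has bias at most $\epsilon$ with respect to a subgroup $H$ if $\mu_A(a)\le(1+\epsilon)\mu_A(a+h)$ for all $a\in A$ and all $h\in H$. *)

From HB Require Import structures.
From mathcomp Require Import all_boot all_order all_algebra all_fingroup.
From mathcomp Require Import reals.
Set Implicit Arguments. Unset Strict Implicit. Unset Printing Implicit Defensive.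
Import Order.TTheory GRing.Theory Num.Theory.
Local Open Scope ring_scope.

Definition sumset_mult (T r : nat) (B : 'I_r -> {set 'Z_T}) (x : 'Z_T) : nat :=
  #|[set f : {ffun 'I_r -> 'Z_T} | [forall i, f i \in B i] && (\sum_i f i == x)]|.

Definition bias_at_most (R : realType) (T : nat) (mu : 'Z_T -> nat)
    (H : {set 'Z_T}) (eps : R) : Prop :=
  forall a h : 'Z_T, (0 < mu a)%N -> h \in H ->
    (mu a)%:R <= (1 + eps) * (mu (a + h))%:R.

From HB Require Import structures.
From mathcomp Require Import all_boot all_order all_algebra all_fingroup.
From mathcomp Require Import cyclic reals zify ring lra.
Set Implicit Arguments. Unset Strict Implicit. Unset Printing Implicit Defensive.
Import Order.TTheory GRing.Theory Num.Theory.

(* Write B_i = {x_i, x_i + d_i} with d_i <> 0. Some d <> 0 occurs as d_i for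
   at least r / (T - 1) indices; take two disjoint sets S1, S2 of n such
   indices. Over each S_j the sumset is a translate of d * Binomial(n), so on
   the coset X_j + <d> its multiplicities are sums of C(n, l) over a residue
   class of l modulo the order of d; by unimodality they differ by at most
   D = C(n, n/2). In the convolution of the two halves the differences of the
   second factor sum to zero over a coset, so the first factor can be centred,
   which bounds the oscillation by |<d>| D^2 / 2 against a total mass of 4^n.
   As D^2 is about 4^n / n and n is about r / T, this is a bias of at most
   4 T^(3/2) / r^(1/2) with respect to <d>, and convolving with the remaining
   summands does not increase the bias. *)

(** * Binomial coefficients *)

Lemma leq_bin_succ n i : i < n./2 -> 'C(n, i) <= 'C(n, i.+1).
Proof.
move=> lt_i_half; rewrite -(@leq_pmul2l i.+1) // mul_bin_left.
by rewrite leq_mul2r; apply/orP; right; lia.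
Qed.

Lemma leq_bin_pred n i : n./2 <= i -> 'C(n, i.+1) <= 'C(n, i).
Proof.
move=> le_half_i; rewrite -(@leq_pmul2l i.+1) // mul_bin_left.
by rewrite leq_mul2r; apply/orP; right; lia.
Qed.

Lemma sum_bin_decr_le n L :
  \sum_(0 <= i < L) ('C(n, i) - 'C(n, i.+1)) <= 'C(n, n./2).
Proof.
suff : \sum_(0 <= i < L) ('C(n, i) - 'C(n, i.+1)) + 'C(n, maxn L n./2)
         <= 'C(n, n./2) by apply: leq_trans; apply: leq_addr.
elim: L => [|L IH]; first by rewrite big_nil max0n.
rewrite big_nat_recr //=; case: (ltnP L n./2) => hL.
  have := leq_bin_succ hL; rewrite (_ : maxn L n./2 = n./2) in IH; last by lia.
  by rewrite (_ : maxn L.+1 n./2 = n./2); lia.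
have := leq_bin_pred hL; rewrite (_ : maxn L n./2 = L) in IH; last by lia.
by rewrite (_ : maxn L.+1 n./2 = L.+1); lia.
Qed.

Lemma bin_double_succ j : 'C(j.+1.*2, j.+1) = 2 * 'C(j.*2.+1, j).
Proof.
rewrite doubleS binS -(@bin_sub j.*2.+1 j) -?addnn; last by lia.
by rewrite (_ : _ - j = j.+1) ?addnn ?mul2n //; lia.
Qed.

Lemma mul_bin_double j : j.+1 * 'C(j.*2.+1, j) = j.*2.+1 * 'C(j.*2, j).
Proof.
rewrite -(@bin_sub j.*2.+1 j) -?addnn; last by lia.
by rewrite (_ : _ - j = j.+1) ?mul_bin_diag //; lia.
Qed.

Lemma central_bin_sq_le j : (3 * j).+1 * 'C(j.*2, j) ^ 2 <= 16 ^ j.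
Proof.
elim: j => [//|j IH].
have e := mul_bin_double j; rewrite bin_double_succ.
set c := 'C(j.*2, j) in IH e *; set b := 'C(j.*2.+1, j) in e *.
rewrite -(@leq_pmul2l (j.+1 ^ 2)) //.
have -> : j.+1 ^ 2 * ((3 * j.+1).+1 * (2 * b) ^ 2) = 4 * (3 * j.+1).+1 * (j.+1 * b) ^ 2 by ring.
rewrite e; apply: (@leq_trans (16 * j.+1 ^ 2 * ((3 * j).+1 * c ^ 2))).
  rewrite (_ : _ * _ ^ 2 = 4 * (3 * j.+1).+1 * j.*2.+1 ^ 2 * c ^ 2); last by ring.
  rewrite mulnA leq_mul2r; apply/orP; right; nia.
apply: leq_trans (leq_mul (leqnn _) IH) _.
by rewrite [16 ^ _.+1]expnS mulnCA mulnA.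
Qed.

Lemma bin_half_sq_le n : 0 < n -> 4 * n.+1 * 'C(n, n./2) ^ 2 <= 3 * 4 ^ n.
Proof.
have e16 j : 4 ^ j.*2 = 16 ^ j by rewrite -mul2n expnM.
have [[j ->] | [j ->]] : (exists j, n = j.*2) \/ (exists j, n = j.*2.+1).
  by move: (odd_double_half n); case: (odd n) => <-; [right | left]; exists n./2.
  rewrite double_gt0 doubleK e16 => j_gt0; have := central_bin_sq_le j; nia.
have := central_bin_sq_le j.+1; rewrite /= uphalf_double bin_double_succ.
rewrite [4 ^ _]expnS e16 [16 ^ _]expnS => + _; nia.
Qed.

(** * Residue class sums *)

Section ResidueClassSums.
Variables (a : nat -> nat) (k Q : nat).
Hypothesis k_gt0 : 0 < k.
Hypothesis a_vanish : forall j, Q * k <= j -> a j = 0.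

Definition class_sum t := \sum_(0 <= q < Q) a (t + q * k).

Lemma sum_nat_blocks (F : nat -> nat) :
  \sum_(0 <= j < Q * k) F j = \sum_(0 <= q < Q) \sum_(0 <= i < k) F (q * k + i).
Proof.
rewrite big_nat_mul; apply: eq_bigr => q _.
rewrite -[X in \sum_(X <= _ < _) _]add0n big_addn mulSn addnK.
by apply: eq_bigr => i _; rewrite addnC.
Qed.

Lemma sum_mod_class_sum t : t < k ->
  \sum_(0 <= l < Q * k) a l * (l %% k == t) = class_sum t.
Proof.
move=> t_lt_k; rewrite sum_nat_blocks; apply: eq_bigr => q _.
rewrite (eq_big_nat _ _ (F2 := fun i => if i == t then a (t + q * k) else 0)).
  by rewrite -big_mkcond big_nat1_eq t_lt_k.
move=> i /andP[_ i_lt_k]; rewrite modnMDl modn_small //.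
by case: eqP => [->|_]; rewrite ?muln1 ?muln0 // addnC.
Qed.

Lemma le_shift_decr j h :
  a j <= a (j + h) + \sum_(0 <= i < h) (a (j + i) - a (j + i).+1).
Proof.
elim: h => [|h IH]; first by rewrite addn0 big_geq ?addn0.
rewrite big_nat_recr //= addnS; move: IH.
set s := \sum_(_ <= _ < _) _; set u := a (j + h); set v := a (j + h).+1; lia.
Qed.

(* a (t + q k) exceeds a (t + q k + h) by at most the decreases of a on
   [t + q k, t + q k + h), and these intervals are disjoint for h <= k. *)
Lemma class_sum_le_shift t h : h <= k ->
  class_sum t <= class_sum (t + h) + \sum_(0 <= i < t + Q * k) (a i - a i.+1).
Proof.
move=> h_le_k; rewrite /class_sum.
apply: leq_trans (leq_sum _ (fun q _ => le_shift_decr (t + q * k) h)) _.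
rewrite big_split /= leq_add //.
  by apply: eq_leq; apply: eq_bigr => q _; rewrite addnAC.
apply: (@leq_trans (\sum_(0 <= j < Q * k) (a (t + j) - a (t + j).+1))).
  rewrite sum_nat_blocks; apply: leq_sum => q _.
  rewrite (@big_cat_nat _ _ _ h 0 k) //=; apply: leq_trans (leq_addr _ _).
  by apply: eq_leq; apply: eq_bigr => i _; rewrite addnA.
rewrite [X in _ <= X](@big_cat_nat _ _ _ t) //= ?leq_addr //; apply: leq_trans (leq_addl _ _).
rewrite -[X in _ <= \sum_(X <= _ < _) _]add0n big_addn addKn.
by apply: eq_leq; apply: eq_bigr => j _; rewrite addnC.
Qed.

Lemma class_sum_shift_period t : class_sum (t + k) <= class_sum t.
Proof.
rewrite /class_sum; case: Q a_vanish => [|P] vanish; first by rewrite !big_geq.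
rewrite big_nat_recr //= big_nat_recl //= (vanish (t + k + P * k)) ?addn0; last by lia.
apply: leq_trans (leq_addl _ _); apply: eq_leq; apply: eq_bigr => q _.
by rewrite mulSn addnA.
Qed.

Lemma class_sum_spread t t' : t < k -> t' < k ->
  class_sum t <= class_sum t' + \sum_(0 <= i < t + Q * k) (a i - a i.+1).
Proof.
move=> t_lt_k t'_lt_k; case: (leqP t t') => [t_le_t' | t'_lt_t].
  by have := @class_sum_le_shift t (t' - t); rewrite subnKC //; apply; lia.
have := @class_sum_le_shift t (t' + k - t); rewrite subnKC; last by lia.
move=> /(_ ltac:(lia)) /leq_trans; apply.
by rewrite leq_add2r class_sum_shift_period.
Qed.
End ResidueClassSums.

Lemma bin_class_sum_spread n k t t' : 0 < k -> t < k -> t' < k ->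
  class_sum (binomial n) k n.+1 t <= class_sum (binomial n) k n.+1 t' + 'C(n, n./2).
Proof.
move=> k_gt0 t_lt_k t'_lt_k; apply: leq_trans (class_sum_spread _ _ t_lt_k t'_lt_k) _ => //.
  by move=> j le_j; rewrite bin_small //; nia.
by rewrite leq_add2l sum_bin_decr_le.
Qed.

Lemma sum_bin_mod n k t : 0 < k -> t < k ->
  \sum_(l < n.+1) 'C(n, l) * (l %% k == t) = class_sum (binomial n) k n.+1 t.
Proof.
move=> k_gt0 t_lt_k.
rewrite -sum_mod_class_sum // -(big_mkord xpredT (fun l => 'C(n, l) * (l %% k == t))).
rewrite [RHS](@big_cat_nat _ _ _ n.+1) //=; last by nia.
rewrite [X in _ = _ + X]big1_seq ?addn0 //.
by move=> l /andP[_]; rewrite mem_index_iota => /andP[lt_n _]; rewrite bin_small.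
Qed.

(** * Convolution on a finite abelian group *)

Section Convolution.
Variables (V : finZmodType) (H : {group V}).
Local Open Scope ring_scope.
Implicit Types (f g : V -> nat) (a b h x y z : V).

Definition conv f g y := (\sum_z f z * g (y - z)%R)%N.

(* The condition of [bias_at_most], imposed at every point rather than only on
   the support, so that it is stable under convolution. *)
Definition bias_le (R : numDomainType) f (e : R) :=
  forall y h, h \in H -> (f y)%:R <= (1 + e) * (f (y + h))%:R.

Lemma coset_shift a b h : h \in H -> (a + h - b \in H) = (a - b \in H).
Proof. by move=> hH; rewrite addrAC -FinRing.zmodMgE groupMr. Qed.

Lemma coset_trans a b x : a - x \in H -> b - x \in H -> a - b \in H.
Proof.
move=> ax bx; rewrite (_ : a - b = (a - x) + - (b - x)); last by rewrite opprB addrA subrK.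
by rewrite -FinRing.zmodMgE -FinRing.zmodVgE groupM ?groupV.
Qed.

Lemma sum_coset_indicator x : (\sum_z ((z - x)%R \in H))%N = #|H|.
Proof.
rewrite (reindex_inj (addIr x)) /=; under eq_bigr => z _ do rewrite addrK.
by rewrite -sum1_card [RHS]big_mkcond.
Qed.

Lemma sum_conv f g : (\sum_y conv f g y = (\sum_z f z) * \sum_z g z)%N.
Proof.
rewrite /conv exchange_big big_distrl /=; apply: eq_bigr => z _.
rewrite -big_distrr /= (reindex_inj (addIr z)) /=.
by under eq_bigr => y _ do rewrite addrK.
Qed.

Lemma bias_le_conv (R : numDomainType) f g (e : R) :
  bias_le f e -> bias_le (conv f g) e.
Proof.
move=> f_bias y h hH; rewrite /conv [in X in _ <= _ * X](reindex_inj (addIr h)) /=.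
rewrite !natr_sum mulr_sumr; apply: ler_sum => z _; rewrite !natrM mulrA.
by rewrite opprD addrACA subrr addr0 ler_wpM2r ?ler0n ?f_bias.
Qed.

Lemma bias_le_of_oscillation (R : realFieldType) f x (delta e : R) :
    (forall y, y - x \notin H -> f y = 0%N) ->
    (forall y h, h \in H -> (f y)%:R <= (f (y + h))%:R + delta) ->
    0 <= e -> #|H|%:R * delta * (1 + e) <= e * (\sum_z f z)%:R ->
  bias_le f e.
Proof.
move=> f_supp f_osc e_ge0 budget y h hH.
have [yx | /f_supp ->] := boolP (y - x \in H); last by rewrite mulr_ge0 ?ler0n // addr_ge0.
set m := (f (y + h))%:R.
(* Every value on the coset is at most m + delta, so the total mass is at most
   |H| (m + delta), and then the budget forces delta <= e m. *)
have f_le z : z - x \in H -> (f z)%:R <= m + delta.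
  move=> zx; have := f_osc z (y + h - z); rewrite (addrC z) subrK; apply.
  by apply: coset_trans zx; rewrite coset_shift.
have sum_le : (\sum_z f z)%:R <= #|H|%:R * (m + delta).
  rewrite -(sum_coset_indicator x) !natr_sum mulr_suml; apply: ler_sum => z _.
  by have [/f_le | /f_supp ->] := boolP (z - x \in H); rewrite ?mul1r ?mul0r.
have H_gt0 : 0 < #|H|%:R :> R by rewrite ltr0n cardG_gt0.
have delta_le : delta <= e * m.
  by rewrite -(ler_pM2l H_gt0); nra.
by have := f_osc y h hH; nra.
Qed.

Section CosetSupported.
Variables (f g : V -> nat) (x1 x2 : V) (D1 D2 : nat).
Hypothesis f_supp : forall y, y - x1 \notin H -> f y = 0%N.
Hypothesis g_supp : forall y, y - x2 \notin H -> g y = 0%N.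
Hypothesis f_osc : forall y y', y - x1 \in H -> y' - x1 \in H -> (f y <= f y' + D1)%N.
Hypothesis g_osc : forall y y', y - x2 \in H -> y' - x2 \in H -> (g y <= g y' + D2)%N.

Lemma conv_supp y : y - (x1 + x2) \notin H -> conv f g y = 0%N.
Proof.
move=> y_out; rewrite /conv big1 // => z _.
have [z_in | /f_supp -> //] := boolP (z - x1 \in H).
rewrite g_supp ?muln0 //; apply: contra y_out => yz_in.
rewrite (_ : y - (x1 + x2) = (z - x1) + (y - z - x2)).
  by rewrite -FinRing.zmodMgE groupM.
by rewrite addrCA !addrA subrK opprD addrA.
Qed.

Lemma centered_approx (R : realFieldType) : exists c : R, forall z,
  `|(f z)%:R - c * (z - x1 \in H)%:R| <= D1%:R / 2 * (z - x1 \in H)%:R.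
Proof.
have x1_in : x1 - x1 \in H by rewrite subrr group1.
have [z0 z0_in z0_min] := @arg_minnP _ _ (fun z => z - x1 \in H) f x1_in.
exists ((f z0)%:R + D1%:R / 2) => z.
have [z_in | /f_supp ->] := boolP (z - x1 \in H); last by rewrite !mulr0 subr0 normr0.
have := z0_min _ z_in; have := f_osc z_in z0_in.
rewrite -!(ler_nat R) natrD !mulr1 ler_norml => ? ?; apply/andP; split; lra.
Qed.

Lemma conv_oscillation (R : realFieldType) y h : h \in H ->
  (conv f g y)%:R <= (conv f g (y + h))%:R + #|H|%:R * D1%:R * D2%:R / 2 :> R.
Proof.
move=> hH; pose C z := (z - x1 \in H)%:R : R.
pose delta z := (g (y - z))%:R - (g (y + h - z))%:R : R.
have [c c_approx] := centered_approx R.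
have delta_coset : \sum_z C z * delta z = 0.
  rewrite /delta; under eq_bigr do rewrite mulrBr.
  apply/eqP; rewrite sumrB subr_eq0; apply/eqP.
  rewrite (reindex_inj (subrI y)) [RHS](reindex_inj (subrI (y + h))) /=.
  by apply: eq_bigr => w _; rewrite !subKr /C (addrAC y h) (coset_shift _ _ hH).
have delta_le z : `|delta z| <= D2%:R.
  rewrite /delta (addrAC y h); have [yz_in | yz_out] := boolP (y - z - x2 \in H).
    have yhz_in : y - z + h - x2 \in H by rewrite coset_shift.
    have := g_osc yz_in yhz_in; have := g_osc yhz_in yz_in.
    rewrite -!(ler_nat R) !natrD ler_norml => ? ?; apply/andP; split; lra.
  by rewrite !g_supp ?(coset_shift _ _ hH) // subrr normr0.
(* Since delta sums to zero over the coset x1 + H, f may be replaced by its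
   centred version, which is at most D1 / 2 in absolute value. *)
have conv_diff : (conv f g y)%:R - (conv f g (y + h))%:R =
                 \sum_z ((f z)%:R - c * C z) * delta z.
  transitivity (\sum_z (f z)%:R * delta z).
    by rewrite /conv !natr_sum -sumrB; apply: eq_bigr => z _; rewrite mulrBr -!natrM.
  rewrite [RHS](eq_bigr (fun z => (f z)%:R * delta z - c * (C z * delta z))).
    by rewrite sumrB -mulr_sumr delta_coset mulr0 subr0.
  by move=> z _; rewrite mulrBl mulrA.
have : (conv f g y)%:R - (conv f g (y + h))%:R <= \sum_z D1%:R / 2 * C z * D2%:R.
  rewrite conv_diff; apply: ler_sum => z _; apply: le_trans (ler_norm _) _.
  by rewrite normrM ler_pM.
rewrite -mulr_suml -mulr_sumr /C -natr_sum sum_coset_indicator; lra.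
Qed.


Lemma conv_bias_le (R : realFieldType) (e : R) : 0 <= e ->
    (#|H| ^ 2 * D1 * D2)%:R * (1 + e) <= 2 * e * ((\sum_z f z) * \sum_z g z)%:R ->
  bias_le (conv f g) e.
Proof.
move=> e_ge0 budget; apply: (bias_le_of_oscillation (x := x1 + x2)) e_ge0 _.
- exact: conv_supp.
- exact: conv_oscillation.
rewrite sum_conv; move: budget; rewrite !natrM; nra.
Qed.
End CosetSupported.
End Convolution.

(** * Sumsets of two-element sets *)

Lemma sum_pred1 (I : finType) (a : I) (P : pred I) : \sum_x ((x == a) && P x) = P a.
Proof. by rewrite (bigD1 a) //= eqxx big1 ?addn0 // => x /negPf ->. Qed.

Lemma card_subsets_by_card (I : finType) (S : {set I}) (P : pred nat) :
  #|[set E : {set I} | (E \subset S) && P #|E|]| =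
  \sum_(l < #|S|.+1) 'C(#|S|, l) * P l.
Proof.
rewrite -sum1_card big_mkcond /=.
transitivity (\sum_(E : {set I})
                \sum_(l < #|S|.+1 | l == #|E| :> nat) ((E \subset S) && P l)).
  apply: eq_bigr => E _.
  rewrite (big_ord1_eq _ (fun l => nat_of_bool ((E \subset S) && P l))) inE ltnS.
  case: (boolP (E \subset S)) => [/subset_leq_card -> | _] /=; first by case: (P #|E|).
  by case: ifP.
rewrite (exchange_big_dep predT) //=; apply: eq_bigr => l _.
rewrite -(cards_draws S l) -[in RHS]sum1_card big_distrl.
rewrite [RHS]big_mkcond [LHS]big_mkcond /=; apply: eq_bigr => E _.
by rewrite inE mul1n eq_sym; case: eqP; case: (E \subset S).
Qed.

Section Sumsets.
Variables (T r : nat).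
Local Notation G := 'Z_T.
Local Open Scope ring_scope.
Implicit Types (A : 'I_r -> {set G}) (S : {set 'I_r}) (f g h : {ffun 'I_r -> G}).

(* [sumset_mult (restr A S)] is the multiplicity function of the sumset of the
   [A i] with [i \in S]: the other summands are replaced by {0}. *)
Definition restr A S i := if i \in S then A i else [set 0 : G].

Definition choice_of A f := [forall i, f i \in A i].

Definition proj S f := [ffun i => if i \in S then f i else 0].

Lemma sumset_multE A y :
  sumset_mult A y = (\sum_f (choice_of A f && ((\sum_i f i)%R == y)))%N.
Proof.
rewrite /sumset_mult -sum1_card big_mkcond /=.
by apply: eq_bigr => f _; rewrite inE; case: ifP.
Qed.

Lemma eq_sumset_mult A A' : A =1 A' -> sumset_mult A =1 sumset_mult A'.
Proof.
move=> eqA y; rewrite !sumset_multE; apply: eq_bigr => f _.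
by congr (_ && _); apply: eq_forallb => i; rewrite eqA.
Qed.

Lemma choice_of_restr_split A S f g h :
  [&& f == g + h, choice_of (restr A S) g & choice_of (restr A (~: S)) h] =
  [&& g == proj S f, h == proj (~: S) f & choice_of A f].
Proof.
rewrite /choice_of /restr; apply/and3P/and3P.
  case=> /eqP -> /forallP g_in /forallP h_in.
  have g_out i : i \notin S -> g i = 0.
    by move=> iS; move: (g_in i); rewrite (negPf iS) inE => /eqP.
  have h_out i : i \in S -> h i = 0.
    by move=> iS; move: (h_in i); rewrite inE iS inE => /eqP.
  split; [apply/eqP/ffunP => i | apply/eqP/ffunP => i | apply/forallP => i];
    rewrite !ffunE ?inE; case: (boolP (i \in S)) => iS /=;
    rewrite ?(h_out _ iS) ?(g_out _ iS) ?addr0 ?add0r //.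
    by have := g_in i; rewrite iS.
  by have := h_in i; rewrite inE iS.
case=> /eqP -> /eqP -> /forallP f_in.
split; [apply/eqP/ffunP => i | apply/forallP => i | apply/forallP => i];
  rewrite !ffunE ?inE; case: (i \in S); rewrite /= ?addr0 ?add0r ?inE //.
Qed.

Lemma conv_sumset_multE A1 A2 y :
  conv (sumset_mult A1) (sumset_mult A2) y =
  (\sum_g \sum_h [&& choice_of A1 g, choice_of A2 h
                   & (\sum_i g i + \sum_i h i)%R == y])%N.
Proof.
rewrite /conv; under eq_bigr do rewrite !sumset_multE big_distrl; rewrite exchange_big.
apply: eq_bigr => g _; under eq_bigr do rewrite big_distrr; rewrite exchange_big.
apply: eq_bigr => h _; rewrite (bigD1 (\sum_i g i)) //= eqxx.
rewrite [X in (_ + X)%N]big1 ?addn0 => [|z].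
  by rewrite mulnb andbT; congr [&& _, _ & _]; rewrite eq_sym subr_eq eq_sym addrC.
by rewrite eq_sym => /negPf ->; rewrite andbF.
Qed.

Lemma sumset_mult_conv_restr A S :
  sumset_mult A =1 conv (sumset_mult (restr A S)) (sumset_mult (restr A (~: S))).
Proof.
move=> y; rewrite conv_sumset_multE sumset_multE.
transitivity (\sum_f \sum_g \sum_h
    [&& g == proj S f, h == proj (~: S) f, choice_of A f & (\sum_i f i)%R == y])%N.
  apply: eq_bigr => f _; set P := _ && _.
  rewrite -(sum_pred1 (proj S f) (fun=> P)); apply: eq_bigr => g _.
  rewrite -(sum_pred1 (proj (~: S) f) (fun=> _ && P)).
  by apply: eq_bigr => h _; rewrite andbCA.
rewrite exchange_big; apply: eq_bigr => g _; rewrite exchange_big; apply: eq_bigr => h _.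
transitivity (\sum_f ((f == (g + h)%R) &&
    [&& choice_of (restr A S) g, choice_of (restr A (~: S)) h & (\sum_i f i)%R == y]))%N.
  apply: eq_bigr => f _; have := choice_of_restr_split A S f g h.
  by rewrite !andbA => /(congr1 (andb^~ ((\sum_i f i)%R == y))) <-; rewrite -!andbA.
rewrite sum_pred1 -big_split /=.
by under eq_bigr do rewrite ffunE.
Qed.

Lemma sumset_mult_restrU A S1 S2 : [disjoint S1 & S2] ->
  sumset_mult (restr A (S1 :|: S2)) =1
  conv (sumset_mult (restr A S1)) (sumset_mult (restr A S2)).
Proof.
move=> S12 y; rewrite (sumset_mult_conv_restr _ S1); apply: eq_bigr => z _.
congr (_ * _)%N; apply: eq_sumset_mult => i; rewrite /restr !inE.
  by case: (i \in S1).
by case: (boolP (i \in S1)) => [/(disjointFr S12) -> | _].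
Qed.

Section TranslatedPairs.
Variables (A : 'I_r -> {set G}) (S : {set 'I_r}) (x : 'I_r -> G) (d : G).
Hypothesis d_neq0 : d != 0.
Hypothesis A_pair : {in S, forall i, A i = [set x i; x i + d]}.

Local Notation X := (\sum_(i in S) x i).
Local Notation N := (sumset_mult (restr A S)).

Definition subset_choice (E : {set 'I_r}) : {ffun 'I_r -> G} :=
  [ffun i => if i \in S then x i + d *+ (i \in E) else 0].

Lemma sum_subset_choice (E : {set 'I_r}) : E \subset S ->
  \sum_i subset_choice E i = X + d *+ #|E|.
Proof.
move=> sES; rewrite (eq_bigr (fun i => if i \in S then x i + d *+ (i \in E) else 0)).
  rewrite -big_mkcond big_split /= sumrMnr; congr (_ + d *+ _).
  rewrite -big_mkcondr -sum1_card; apply: eq_bigl => i.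
  by rewrite andb_idl // => /(subsetP sES).
by move=> i _; rewrite ffunE.
Qed.

Lemma subset_choice_inj : {in powerset S &, injective subset_choice}.
Proof.
move=> E1 E2; rewrite !inE => /subsetP sE1 /subsetP sE2 /ffunP eqE; apply/setP => i.
have := eqE i; rewrite !ffunE; case: (boolP (i \in S)) => iS; last first.
  by rewrite (contraNF (sE1 i) iS) (contraNF (sE2 i) iS).
move/addrI/eqP; case: (i \in E1); case: (i \in E2); rewrite ?mulr1n ?mulr0n //.
  by rewrite (negPf d_neq0).
by rewrite eq_sym (negPf d_neq0).
Qed.

Lemma sumset_mult_restr_pairs y :
  N y = (\sum_(l < #|S|.+1) 'C(#|S|, l) * ((X + d *+ l)%R == y))%N.
Proof.
transitivity #|[set E : {set 'I_r} | (E \subset S) && (X + d *+ #|E| == y)]|;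
  last exact: (card_subsets_by_card S (fun l => X + d *+ l == y)).
rewrite /sumset_mult -(card_in_imset (f := subset_choice)); last first.
  move=> E1 E2; rewrite !inE => /andP[sE1 _] /andP[sE2 _].
  by apply: subset_choice_inj; rewrite inE.
apply: eq_card => f; rewrite [in LHS]inE; apply/andP/imsetP.
  case=> /forallP f_in /eqP f_sum; pose E := [set i in S | f i != x i].
  have sES : E \subset S by apply/subsetP => i; rewrite inE => /andP[].
  have fE : f = subset_choice E.
    apply/ffunP => i; rewrite !ffunE inE; move: (f_in i); rewrite /restr.
    case: (boolP (i \in S)) => iS /=; last by rewrite inE => /eqP.
    rewrite A_pair // !inE => /orP[] /eqP ->; first by rewrite eqxx mulr0n addr0.
    by rewrite -[X in _ != X](addr0 (x i)) (inj_eq (addrI _)) d_neq0 mulr1n.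
  by exists E; rewrite // inE sES -f_sum fE sum_subset_choice ?eqxx.
case=> E /[1!inE] /andP[sES /eqP E_sum] ->.
split; last by rewrite sum_subset_choice // E_sum.
apply/forallP => i; rewrite ffunE /restr; case: (boolP (i \in S)) => iS; last by rewrite inE.
by rewrite A_pair // !inE; case: (i \in E); rewrite ?mulr0n ?addr0 eqxx ?orbT.
Qed.

Lemma sumset_pairs_supp y : y - X \notin <[d]>%g -> N y = 0%N.
Proof.
move=> y_out; rewrite sumset_mult_restr_pairs big1 // => l _.
case: eqP => [y_eq | _]; last by rewrite muln0.
by move: y_out; rewrite -y_eq addrC addKr -FinRing.zmodXgE mem_cycle.
Qed.

Lemma sumset_pairs_class_sum t : (t < #[d]%g)%N ->
  N (X + d *+ t) = class_sum (binomial #|S|) #[d]%g #|S|.+1 t.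
Proof.
move=> t_lt; rewrite sumset_mult_restr_pairs -sum_bin_mod ?order_gt0 //.
apply: eq_bigr => l _; rewrite (inj_eq (addrI _)) -!FinRing.zmodXgE.
by rewrite eq_expg_mod_order (modn_small t_lt).
Qed.

Lemma sumset_pairs_oscillation y y' : y - X \in <[d]>%g -> y' - X \in <[d]>%g ->
  (N y <= N y' + 'C(#|S|, #|S|./2))%N.
Proof.
case/cyclePmin => t t_lt y_eq; case/cyclePmin => t' t'_lt y'_eq.
rewrite -(subrK X y) -(subrK X y') y_eq y'_eq !FinRing.zmodXgE ![_ + X]addrC.
by rewrite !sumset_pairs_class_sum // bin_class_sum_spread ?order_gt0.
Qed.

Lemma sum_sumset_pairs : (\sum_y N y)%N = (2 ^ #|S|)%N.
Proof.
under eq_bigr do rewrite sumset_mult_restr_pairs.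
rewrite exchange_big /= -[2%N]/(1 + 1)%N expnDn; apply: eq_bigr => l _.
rewrite -big_distrr /= (bigD1 (X + d *+ l)) //= eqxx big1 ?addn0 => [|z].
  by rewrite !exp1n !muln1.
by rewrite eq_sym => /negPf ->.
Qed.
End TranslatedPairs.

Lemma sumset_halves_bias_le (R : realFieldType) A S1 S2 (x : 'I_r -> G) d n (e : R) :
    d != 0 -> [disjoint S1 & S2] -> #|S1| = n -> #|S2| = n ->
    {in S1 :|: S2, forall i, A i = [set x i; x i + d]} ->
    0 <= e -> (#[d]%g ^ 2 * 'C(n, n./2) ^ 2)%:R * (1 + e) <= 2 * e * (4 ^ n)%:R ->
  bias_le <[d]>%G (sumset_mult (restr A (S1 :|: S2))) e.
Proof.
move=> d_neq0 S12 card_S1 card_S2 A_pair e_ge0 budget.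
have A_pair1 : {in S1, forall i, A i = [set x i; x i + d]}.
  by move=> i iS; rewrite A_pair // inE iS.
have A_pair2 : {in S2, forall i, A i = [set x i; x i + d]}.
  by move=> i iS; rewrite A_pair // inE iS orbT.
pose D := 'C(n, n./2).
have : bias_le <[d]>%G (conv (sumset_mult (restr A S1)) (sumset_mult (restr A S2))) e.
  apply: (conv_bias_le (D1 := D) (D2 := D) (sumset_pairs_supp d_neq0 A_pair1)
            (sumset_pairs_supp d_neq0 A_pair2) _ _ e_ge0).
  - by rewrite /D -{1 2}card_S1; apply: sumset_pairs_oscillation.
  - by rewrite /D -{1 2}card_S2; apply: sumset_pairs_oscillation.
  rewrite (sum_sumset_pairs d_neq0 A_pair1) (sum_sumset_pairs d_neq0 A_pair2).
  by rewrite card_S1 card_S2 -expnMn -mulnA.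
by move=> conv_bias y h hH; rewrite !(sumset_mult_restrU _ S12); apply: conv_bias.
Qed.
End Sumsets.

(** * The main estimate *)

Lemma two_sets_as_translates (I : finType) (V : finZmodType) (B : I -> {set V}) :
    (forall i, #|B i| = 2) ->
  exists x d : I -> V, forall i, d i != 0%R /\ B i = [set x i; x i + d i]%R.
Proof.
move=> card_B.
have pair i : exists p : V * V, p.2 != 0%R /\ B i = [set p.1; p.1 + p.2]%R.
  have /cards2P [a [b [ab ->]]] : #|B i| == 2 by rewrite card_B.
  by exists (a, b - a)%R; rewrite subr_eq0 eq_sym (addrC a) subrK.
have [p p_pair] := fin_all_exists pair.
by exists (fun i => (p i).1), (fun i => (p i).2).
Qed.

Lemma exists_large_fiber (I V : finType) (v0 : V) (f : I -> V) (i0 : I) :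
    (forall i, f i != v0) ->
  exists2 v, v != v0 & #|I| <= #|V|.-1 * #|[set i | f i == v]|.
Proof.
move=> f_neq; pose fiber v := #|[set i | f i == v]|.
have [v v_neq v_max] := @arg_maxnP V (f i0) (fun v => v != v0) fiber (f_neq i0).
exists v => //; rewrite -(cardC1 v0) -sum_nat_const.
have -> : #|I| = \sum_(u | u != v0) fiber u.
  rewrite -sum1_card (partition_big f (fun u => u != v0)) //=.
  by apply: eq_bigr => u _; rewrite /fiber -sum1_card; apply: eq_bigl => i; rewrite inE.
by apply: leq_sum => u; apply: v_max.
Qed.

Lemma exists_subset_card (I : finType) (A : {set I}) k : k <= #|A| ->
  exists2 S : {set I}, S \subset A & #|S| = k.
Proof.
rewrite -bin_gt0 -cards_draws => /card_gt0P [S]; rewrite inE => /andP[sSA /eqP cS].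
by exists S.
Qed.

Lemma exists_disjoint_halves (I : finType) (C : {set I}) :
  exists S1 S2 : {set I},
    [/\ S1 :|: S2 \subset C, [disjoint S1 & S2], #|S1| = #|C|./2 & #|S2| = #|C|./2].
Proof.
have [S1 sS1C card_S1] := @exists_subset_card _ C #|C|./2 ltac:(lia).
have half_le : #|C|./2 <= #|C :\: S1| by rewrite cardsD (setIidPr sS1C) card_S1; lia.
have [S2 sS2C card_S2] := exists_subset_card half_le.
exists S1, S2; split=> //.
- by rewrite subUset sS1C (subset_trans sS2C) ?subsetDl.
by rewrite disjoint_sym disjoints_subset (subset_trans sS2C) // setDE subsetIr.
Qed.

Local Open Scope ring_scope.

Lemma bias_budget (R : realType) (T r n : nat) (e : R) :
    (1 < T)%N -> (T ^ 3 <= r)%N -> (r <= 2 * T * n.+1)%N -> (0 < n)%N ->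
    e = 4 * T%:R * Num.sqrt T%:R / Num.sqrt r%:R ->
  (T ^ 2 * 'C(n, n./2) ^ 2)%:R * (1 + e) <= 2 * e * (4 ^ n)%:R.
Proof.
move=> T_gt1 T3_le_r r_le n_gt0 ->.
have bin_le : 4 * n.+1%:R * 'C(n, n./2)%:R ^+ 2 <= 3 * 4 ^+ n :> R.
  by rewrite -!natrX -!natrM ler_nat bin_half_sq_le.
have t3_le_q : T%:R ^+ 3 <= r%:R :> R by rewrite -natrX ler_nat.
have q_le : r%:R <= 2 * T%:R * n.+1%:R :> R by rewrite -!natrM ler_nat.
rewrite natrM !natrX.
set t : R := T%:R in t3_le_q q_le *; set q : R := r%:R in t3_le_q q_le *.
set k : R := n.+1%:R in bin_le q_le *; set D : R := 'C(n, n./2)%:R in bin_le *.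
have t_gt0 : 0 < t by rewrite ltr0n; lia.
have q_gt0 : 0 < q by apply: lt_le_trans t3_le_q; rewrite exprn_gt0.
pose v := t * Num.sqrt t / Num.sqrt q.
have v_ge0 : 0 <= v by rewrite divr_ge0 ?mulr_ge0 ?sqrtr_ge0 ?ltW.
have v2q : v ^+ 2 * q = t ^+ 3.
  rewrite !exprMn exprVn !sqr_sqrtr ?ltW // divfK ?gt_eqF //.
  by rewrite -exprSr.
have v_le1 : v <= 1.
  have : v ^+ 2 <= 1 by rewrite -(ler_pM2r q_gt0) mul1r v2q.
  by nra.
have t2_le : t ^+ 2 <= 2 * v ^+ 2 * k.
  rewrite -(ler_pM2r t_gt0) -exprSr -v2q; have := ler_wpM2l (sqr_ge0 v) q_le; nra.
have k_ge0 : 0 <= k by rewrite ler0n.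
have key : 3 * t ^+ 2 * (1 + 4 * v) <= 32 * v * k.
  have v4_ge0 : 0 <= 1 + 4 * v by lra.
  have := ler_wpM2r v4_ge0 t2_le; have := mulr_ge0 v_ge0 k_ge0.
  have : v ^+ 2 <= v by rewrite expr2 ler_piMl.
  nra.
have -> : 4 * t * Num.sqrt t / Num.sqrt q = 4 * v by rewrite /v !mulrA.
nra.
Qed.

Theorem lemma7 (R : realType) (T r : nat) (hT : (1 < T)%N)
    (B : 'I_r -> {set 'Z_T})
    (hB : forall i, #|B i| = 2%N)
    (hr : (T ^ 3 <= r)%N) :
  exists H : {group 'Z_T},
    H :!=: 1%G /\
    bias_at_most (sumset_mult B) H
      (4 * T%:R * Num.sqrt (T%:R : R) / Num.sqrt (r%:R : R)).
Proof.
have r_gt0 : (0 < r)%N by apply: leq_trans hr; rewrite expn_gt0; lia.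
have [x [del B_pair]] := two_sets_as_translates hB.
have [d d_neq0 r_le] := exists_large_fiber (Ordinal r_gt0) (fun i => (B_pair i).1).
rewrite !card_ord Zp_cast // in r_le; set C := [set i | del i == d] in r_le.
have [S1 [S2 [sSC S12 card_S1 card_S2]]] := exists_disjoint_halves C.
set e : R := 4 * T%:R * _ / _.
have e_ge0 : 0 <= e by rewrite divr_ge0 ?sqrtr_ge0 // !mulr_ge0 ?sqrtr_ge0.
have bias_S : bias_le <[d]>%G (sumset_mult (restr B (S1 :|: S2))) e.
  apply: (sumset_halves_bias_le (x := x) d_neq0 S12 card_S1 card_S2 _ e_ge0).
    by move=> i /(subsetP sSC); rewrite inE => /eqP <-; case: (B_pair i).
  have order_le : (#[d]%g <= T)%N.
    by apply: leq_trans (max_card _) _; rewrite card_ord Zp_cast.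
  have r_le' : (r <= 2 * T * (#|C|./2).+1)%N by have := odd_double_half #|C|; nia.
  have n_gt0 : (0 < #|C|./2)%N by have := odd_double_half #|C|; nia.
  apply: le_trans (bias_budget hT hr r_le' n_gt0 erefl).
  by rewrite ler_wpM2r ?ler_nat ?leq_mul ?leq_exp2r // (addr_ge0 ler01 e_ge0).
exists <[d]>%G; split; first by rewrite cycle_eq1.
move=> a h _ hH; have := bias_le_conv (sumset_mult (restr B (~: (S1 :|: S2)))) bias_S a hH.
by rewrite -!sumset_mult_conv_restr.
Qed.
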